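(* Let $\varepsilon>0$, let $R_1,\dots,R_n:[d]\to\mathcal Y$ be $\varepsilon$-private randomizers with $\mathcal Y$ finite and $d$ even, let $|\vec R|_{\neq}$ be the number of distinct randomizers among them, and suppose $d>4(e^{2\varepsilon}-1)^2\ln(12|\mathcal Y|\cdot|\vec R|_{\neq})$. If $H$ is chosen uniformly at random among subsets of $[d]$ of size $d/2$, then with probability at least $2/3$ over $H$, every randomizer $Q_{H,R_i}$, $i\in[n]$, is $\varepsilon'$-private, where \[ \varepsilon'=(e^{2\varepsilon}-1)\sqrt{\frac{16}{d}\ln\left(12|\mathcal Y|\cdot|\vec R|_{\neq}\right)} . \]
   Context: A randomizer $R:\mathcal X\to\mathcal Y$ is $\varepsilon$-private if for all $x,x'\in\mathcal X$ and all $Y\subseteq\mathcal Y$, $\Pr[R(x)\in Y]\le e^{\varepsilon}\Pr[R(x')\in Y]$. $\mathbf U_H$ is the uniform distribution on $H\subseteq[d]$, $\overline H=[d]\setminus H$, and $R(\mathbf U_H)$ is the distribution of $R(\hat x)$ with $\hat x\sim\mathbf U_H$. For $H\subset[d]$ with $|H|=d/2$ and a randomizer $R:[d]\to\mathcal Y$, $Q_{H,R}:\{\pm1\}\to\mathcal Y$ is the randomizer that on input $+1$ outputs a sample of $R(\mathbf U_H)$ and on input $-1$ outputs a sample of $R(\mathbf U_{\overline H})$. *)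

From HB Require Import structures.
From mathcomp Require Import all_boot.
From Stdlib Require Import Reals.
Set Implicit Arguments. Unset Strict Implicit. Unset Printing Implicit Defensive.

Lemma Rplus_assoc' : associative Rplus.
Proof. by move=> a b c; rewrite Rplus_assoc. Qed.
HB.instance Definition _ := Monoid.isComLaw.Build R 0%R Rplus Rplus_assoc' Rplus_comm Rplus_0_l.

Notation "\rsum_ ( i 'in' A ) F" := (\big[Rplus/0%R]_(i in A) F)
  (at level 41, F at level 41, i, A at level 50).
Notation "\rsum_ ( i : T ) F" := (\big[Rplus/0%R]_(i : T) F)
  (at level 41, F at level 41, i at level 50).

(* A randomizer X -> Y (Y finite) is given by its output distribution:
   rz x y = Pr[R(x) = y]. *)
Definition randomizer (X Y : finType) := X -> Y -> R.

Definition is_randomizer (X Y : finType) (rz : randomizer X Y) : Prop :=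
  (forall x y, (0 <= rz x y)%R) /\ (forall x, \rsum_(y : Y) rz x y = 1%R).

Definition prob (Y : finType) (p : Y -> R) (S : {set Y}) : R := \rsum_(y in S) p y.

Definition is_private (X Y : finType) (eps : R) (rz : randomizer X Y) : Prop :=
  forall (x x' : X) (S : {set Y}), (prob (rz x) S <= exp eps * prob (rz x') S)%R.

(* Distribution of R(U_H), U_H uniform on H subset of [d] = 'I_d. *)
Definition unif_out (d : nat) (Y : finType) (rz : randomizer 'I_d Y) (H : {set 'I_d}) : Y -> R :=
  fun y => (\rsum_(x in H) rz x y / INR #|H|)%R.

(* Q_{H,R} : {+1,-1} -> Y; the input +1 is encoded as [true], -1 as [false]. *)
Definition Q (d : nat) (Y : finType) (H : {set 'I_d}) (rz : randomizer 'I_d Y) : randomizer bool Y :=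
  fun b => if b then unif_out rz H else unif_out rz (~: H).

(* k is the number of distinct randomizers among Rs 0, ..., Rs (n-1):
   the classes of "Rs i = Rs j" are exactly indexed by 'I_k. *)
Definition num_distinct (n : nat) (T : Type) (Rs : 'I_n -> T) (k : nat) : Prop :=
  exists g : 'I_n -> 'I_k,
    (forall j : 'I_k, exists i, g i = j) /\ (forall i i', g i = g i' <-> Rs i = Rs i').

(* Write [Z_y(H)] for the sum of [R x y] over [x] in [H] minus the sum over the complement.
   If [|Z_y(H)| <= c * sum_x R x y] for every output [y], with [c < 1/2], the two output
   distributions of [Q_{H,R}] are within a factor [(1 + c) / (1 - c) <= exp (4 c)] of each other.
   To draw a uniform half [H], fix a perfect matching of [[d]] into [d/2] pairs and keep one
   point of each pair by a fair coin; averaging over all matchings makes [H] exactly uniform.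
   For a fixed matching [Z_y(H)] is a Rademacher sum whose terms, differences of the two
   entries of a pair, are at most [(exp (2 eps) - 1) / d * sum_x R x y] by [eps]-privacy, so
   Hoeffding's inequality (through [cosh x <= exp (x^2 / 2)]) bounds the fraction of bad coin
   vectors by [2 / (12 |Y| k)]. A union bound over the [k] distinct randomizers and the [|Y|]
   outputs leaves a bad fraction of at most [1/6]. *)

From HB Require Import structures.
From mathcomp Require Import all_boot zify.
From Stdlib Require Import Reals Lra.

Set Implicit Arguments.
Unset Strict Implicit.
Unset Printing Implicit Defensive.

Open Scope R_scope.

Definition Rltb (x y : R) : bool := if Rlt_dec x y then true else false.

Lemma RltbP x y : reflect (x < y) (Rltb x y).
Proof. by rewrite /Rltb; case: Rlt_dec => h; constructor. Qed.

Lemma Rmult_assoc' : associative Rmult.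
Proof. by move=> a b c; rewrite Rmult_assoc. Qed.
HB.instance Definition _ :=
  Monoid.isComLaw.Build R 1 Rmult Rmult_assoc' Rmult_comm Rmult_1_l.
HB.instance Definition _ := Monoid.isMulLaw.Build R 0 Rmult Rmult_0_l Rmult_0_r.
HB.instance Definition _ :=
  Monoid.isAddLaw.Build R Rmult Rplus Rmult_plus_distr_r Rmult_plus_distr_l.

Section RealBigops.
Variables (I : Type) (r : seq I) (P : pred I).

Lemma rsum_le (F G : I -> R) : (forall i, P i -> F i <= G i) ->
  \big[Rplus/0]_(i <- r | P i) F i <= \big[Rplus/0]_(i <- r | P i) G i.
Proof. by move=> FG; apply: (big_ind2 (fun x y => x <= y)) => *; lra || exact: FG. Qed.

Lemma rsum_ge0 (F : I -> R) : (forall i, P i -> 0 <= F i) ->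
  0 <= \big[Rplus/0]_(i <- r | P i) F i.
Proof. by move=> F0; apply: (big_ind (fun x => 0 <= x)) => *; lra || exact: F0. Qed.

Lemma rprod_le (F G : I -> R) : (forall i, P i -> 0 <= F i <= G i) ->
  \big[Rmult/1]_(i <- r | P i) F i <= \big[Rmult/1]_(i <- r | P i) G i.
Proof.
move=> FG.
suff [] : 0 <= \big[Rmult/1]_(i <- r | P i) F i <= \big[Rmult/1]_(i <- r | P i) G i by [].
apply: (big_ind2 (fun x y => 0 <= x <= y)) => //; first lra.
move=> x1 x2 y1 y2 ? ?; split; [apply: Rmult_le_pos | apply: Rmult_le_compat]; lra.
Qed.

Lemma rsum_mull (k : R) (F : I -> R) :
  k * \big[Rplus/0]_(i <- r | P i) F i = \big[Rplus/0]_(i <- r | P i) (k * F i).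
Proof. by apply: (big_morph (Rmult k)) => [x y|]; ring. Qed.

Lemma rsum_opp (F : I -> R) :
  - (\big[Rplus/0]_(i <- r | P i) F i) = \big[Rplus/0]_(i <- r | P i) - F i.
Proof. by apply: (big_morph Ropp) => [x y|]; ring. Qed.

Lemma exp_rsum (F : I -> R) :
  exp (\big[Rplus/0]_(i <- r | P i) F i) = \big[Rmult/1]_(i <- r | P i) exp (F i).
Proof. exact: (big_morph exp exp_plus exp_0). Qed.

End RealBigops.

Lemma INR_card (T : finType) (A : {pred T}) : INR #|A| = \rsum_(i in A) 1.
Proof. by rewrite -sum1_card; apply: (big_morph INR plus_INR). Qed.

Lemma rsum_const (T : finType) (c : R) : \rsum_(i : T) c = INR #|T| * c.
Proof.
rewrite big_const; elim: #|T| => [|m IH]; first by rewrite /=; ring.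
by rewrite iterS IH S_INR; ring.
Qed.

Lemma rprod_const (T : finType) (c : R) : \big[Rmult/1]_(i : T) c = c ^ #|T|.
Proof. by rewrite big_const; elim: #|T| => //= m ->. Qed.

Lemma rsum_subset_le (T : finType) (A : {pred T}) (F : T -> R) :
  (forall i, 0 <= F i) -> \rsum_(i in A) F i <= \rsum_(i : T) F i.
Proof.
move=> F0; rewrite [X in X <= _]big_mkcond; apply: rsum_le => i _.
by case: (i \in A); [lra | exact: F0].
Qed.

Lemma INR_expn (m n : nat) : INR (expn m n) = INR m ^ n.
Proof. by elim: n => // n IH; rewrite expnS -multE mult_INR IH. Qed.

Lemma exp_le_exp x y : x <= y -> exp x <= exp y.
Proof. by case=> [/exp_increasing/Rlt_le | ->]; [|apply: Rle_refl]. Qed.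

Lemma sqr_le_of_abs_le x A : Rabs x <= A -> x * x <= A * A.
Proof. by rewrite /Rabs; case: Rcase_abs => sgn le; nra. Qed.

(** * Hoeffding's inequality for Rademacher sums *)

Lemma le_of_deriv_ge0 (f f' : R -> R) x :
  (forall y, derivable_pt_lim f y (f' y)) -> (forall y, 0 < y -> 0 <= f' y) ->
  0 <= x -> f 0 <= f x.
Proof.
move=> df f'_ge0 x_ge0; case: (Req_dec x 0) => [-> | x_neq0]; first lra.
pose pr y : derivable_pt f y := exist _ (f' y) (df y).
have [y [fxE [y_gt0 _]]] := MVT_cor1 f 0 x pr ltac:(lra).
rewrite (derive_pt_eq_0 _ _ _ _ (df y)) in fxE.
by have := f'_ge0 y y_gt0; nra.
Qed.

Lemma sinh_le_mul_cosh x : 0 <= x -> sinh x <= x * cosh x.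
Proof.
move=> x_ge0; pose g y := y * cosh y - sinh y.
suff : g 0 <= g x by rewrite /g /sinh /cosh Ropp_0 exp_0; lra.
apply: (@le_of_deriv_ge0 g (fun y => y * sinh y)) => // [y | y y_gt0].
  have -> : y * sinh y = (1 * cosh y + y * sinh y) - cosh y by ring.
  apply: derivable_pt_lim_minus; last exact: derivable_pt_lim_sinh.
  exact: (derivable_pt_lim_mult id cosh _ _ _ (derivable_pt_lim_id y)
    (derivable_pt_lim_cosh y)).
have : 0 < sinh y by rewrite /sinh; have := exp_increasing (- y) y; lra.
by nra.
Qed.

Lemma cosh_le_exp_sqr_half x : cosh x <= exp (x * x / 2).
Proof.
wlog x_ge0 : x / 0 <= x.
  move=> le; case: (Rle_dec 0 x) => [|/Rnot_le_lt x_lt0]; first exact: le.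
  rewrite (_ : x * x = - x * - x); last ring.
  by rewrite /cosh -{1}(Ropp_involutive x) Rplus_comm; apply: le; lra.
suff : cosh x * exp (- (x * x / 2)) <= 1.
  rewrite exp_Ropp => le1; have u_gt0 := exp_pos (x * x / 2).
  have := Rmult_le_compat_r _ _ _ (Rlt_le _ _ u_gt0) le1.
  by rewrite Rmult_assoc Rinv_l; lra.
pose g y := - (cosh y * exp (- (y * y / 2))).
suff : g 0 <= g x.
  by rewrite /g /cosh Ropp_0 Rmult_0_l /Rdiv Rmult_0_l Ropp_0 exp_0; lra.
apply: (@le_of_deriv_ge0 g (fun y => (y * cosh y - sinh y) * exp (- (y * y / 2))))
  => // [y | y y_gt0].
  have -> : (y * cosh y - sinh y) * exp (- (y * y / 2)) = - (sinh y * exp (- (y * y / 2)) +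
      cosh y * (exp (- (y * y / 2)) * - ((1 * y + y * 1) * / 2))) by field.
  apply: derivable_pt_lim_opp.
  apply: (derivable_pt_lim_mult cosh (fun y => exp (- (y * y / 2)))).
    exact: derivable_pt_lim_cosh.
  apply: (derivable_pt_lim_comp (fun y => - (y * y / 2)) exp); last exact: derivable_pt_lim_exp.
  apply: (derivable_pt_lim_opp (fun y => y * y / 2)).
  apply: (derivable_pt_lim_scal_right (fun y => y * y)).
  exact: (derivable_pt_lim_mult id id _ _ _ (derivable_pt_lim_id y) (derivable_pt_lim_id y)).
have := sinh_le_mul_cosh (Rlt_le _ _ y_gt0); have := exp_pos (- (y * y / 2)); nra.
Qed.

(* Markov's inequality for [exp (lam * Z)] under the counting measure. *)
Lemma card_gt_mul_exp_le (T : finType) (Z : T -> R) t lam : 0 <= lam ->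
  INR #|[set s | Rltb t (Z s)]| * exp (lam * t) <= \rsum_(s : T) exp (lam * Z s).
Proof.
move=> lam_ge0; rewrite INR_card Rmult_comm rsum_mull.
apply: (Rle_trans _ (\rsum_(s in [set s | Rltb t (Z s)]) exp (lam * Z s))).
  apply: rsum_le => s; rewrite inE Rmult_1_r => /RltbP lt_tZ.
  by apply: exp_le_exp; apply: Rmult_le_compat_l; lra.
by apply: rsum_subset_le => s; apply: Rlt_le; apply: exp_pos.
Qed.

Definition signed_sum (D : nat) (a : 'I_D -> R) (s : {ffun 'I_D -> bool}) : R :=
  \rsum_(i : 'I_D) (if s i then a i else - a i).

Lemma rsum_exp_signed_sum D (a : 'I_D -> R) lam :
  \rsum_(s : {ffun 'I_D -> bool}) exp (lam * signed_sum a s) =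
  \big[Rmult/1]_(i : 'I_D) (exp (lam * a i) + exp (- (lam * a i))).
Proof.
transitivity (\big[Rmult/1]_(i : 'I_D) \rsum_(b : bool) exp (lam * if b then a i else - a i)).
  rewrite bigA_distr_bigA; apply: eq_bigr => s _.
  by rewrite /signed_sum rsum_mull exp_rsum.
by apply: eq_bigr => i _; rewrite big_bool /= Ropp_mult_distr_r.
Qed.

Lemma card_signed_sum_gt D (a : 'I_D -> R) A t :
  0 < A -> (forall i, Rabs (a i) <= A) -> 0 <= t -> (0 < D)%nat ->
  INR #|[set s | Rltb t (signed_sum a s)]|
    <= 2 ^ D * exp (- (t * t / (2 * INR D * (A * A)))).
Proof.
move=> A_gt0 a_le t_ge0 D_gt0.
have D_gt0R : 0 < INR D by apply: lt_0_INR; apply/ltP.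
have DAA_gt0 : 0 < INR D * (A * A) by apply: Rmult_lt_0_compat; nra.
pose lam := t / (INR D * (A * A)).
have lam_ge0 : 0 <= lam by apply: Rmult_le_pos => //; apply/Rlt_le/Rinv_0_lt_compat.
have mgf_le : \rsum_(s : {ffun 'I_D -> bool}) exp (lam * signed_sum a s)
    <= 2 ^ D * exp (INR D * (lam * lam * (A * A) / 2)).
  have -> : 2 ^ D * exp (INR D * (lam * lam * (A * A) / 2)) =
      \big[Rmult/1]_(i : 'I_D) (2 * exp (lam * lam * (A * A) / 2)).
    by rewrite big_split /= rprod_const -exp_rsum rsum_const card_ord.
  rewrite rsum_exp_signed_sum.
  apply: rprod_le => i _; split.
    by have := exp_pos (lam * a i); have := exp_pos (- (lam * a i)); lra.
  apply: Rle_trans (_ : 2 * exp (lam * a i * (lam * a i) / 2) <= _).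
    by have := cosh_le_exp_sqr_half (lam * a i); rewrite /cosh; lra.
  apply/Rmult_le_compat_l/exp_le_exp; first lra.
  have := sqr_le_of_abs_le (a_le i); have := Rle_0_sqr lam; rewrite /Rsqr; nra.
have markov := card_gt_mul_exp_le (signed_sum a) t lam_ge0.
set N := INR _ in markov *.
have -> : N = N * exp (lam * t) * exp (- (lam * t)).
  by rewrite Rmult_assoc -exp_plus Rplus_opp_r exp_0 Rmult_1_r.
have := Rmult_le_compat_r _ _ _ (Rlt_le _ _ (exp_pos (- (lam * t))))
  (Rle_trans _ _ _ markov mgf_le).
move/Rle_trans; apply.
rewrite Rmult_assoc -exp_plus; right; congr (_ * exp _).
by rewrite /lam; field; split; nra.
Qed.

Lemma card_abs_signed_sum_gt D (a : 'I_D -> R) A t :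
  0 < A -> (forall i, Rabs (a i) <= A) -> 0 <= t -> (0 < D)%nat ->
  INR #|[set s | Rltb t (Rabs (signed_sum a s))]|
    <= 2 * 2 ^ D * exp (- (t * t / (2 * INR D * (A * A)))).
Proof.
move=> A_gt0 a_le t_ge0 D_gt0.
have signed_sum_opp s : signed_sum (fun i => - a i) s = - signed_sum a s.
  by rewrite /signed_sum rsum_opp; apply: eq_bigr => i _; case: (s i).
have sub : [set s | Rltb t (Rabs (signed_sum a s))] \subset
    [set s | Rltb t (signed_sum a s)] :|: [set s | Rltb t (signed_sum (fun i => - a i) s)].
  apply/subsetP => s; rewrite !inE signed_sum_opp /Rabs.
  by case: Rcase_abs => _ /RltbP lt; apply/orP; [right | left]; apply/RltbP.
have opp_le i : Rabs (- a i) <= A by rewrite Rabs_Ropp.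
have := card_signed_sum_gt A_gt0 a_le t_ge0 D_gt0.
have := card_signed_sum_gt A_gt0 opp_le t_ge0 D_gt0.
have := le_INR _ _ (leP (leq_trans (subset_leq_card sub) (leq_card_setU _ _).1)).
rewrite plus_INR; lra.
Qed.

(** * Random halves from random matchings *)

Definition balance_radius eps t d : R := (exp (2 * eps) - 1) * sqrt (t / INR d).

Section Halves.
Variables D d : nat.
Implicit Types (e : {ffun 'I_D * bool -> 'I_d}) (s : {ffun 'I_D -> bool}).
Implicit Types (p : 'I_d -> R) (H : {set 'I_d}).

(* A perfect matching [e] of [[d]] into pairs [{e (i, true), e (i, false)}] and a choice
   of one point per pair by the coins [s]. *)
Definition half_of e s : {set 'I_d} := [set e (i, s i) | i : 'I_D].

Definition total p : R := \rsum_(x : 'I_d) p x.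

Definition imbalance p H : R := \rsum_(x in H) p x - \rsum_(x in ~: H) p x.

Definition unbalanced c p H : bool := Rltb (c * total p) (Rabs (imbalance p H)).

Lemma total_split p H : total p = \rsum_(x in H) p x + \rsum_(x in ~: H) p x.
Proof.
by rewrite /total (bigID (mem H)) /=; congr (_ + _); apply: eq_bigl => x; rewrite inE.
Qed.

Lemma card_half_of e s : injective e -> #|half_of e s| = D.
Proof. by move=> e_inj; rewrite card_imset ?card_ord // => i j /e_inj []. Qed.

Lemma rsum_half_of e s p : injective e ->
  \rsum_(x in half_of e s) p x = \rsum_(i : 'I_D) p (e (i, s i)).
Proof. by move=> e_inj; rewrite big_imset // => i j _ _ /e_inj []. Qed.

Lemma total_matching e p : injective e -> d = (D + D)%nat ->
  total p = \rsum_(i : 'I_D) (p (e (i, true)) + p (e (i, false))).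
Proof.
move=> e_inj dE.
have e_onto : e @: [set: 'I_D * bool] = [set: 'I_d].
  apply/eqP; rewrite eqEcard subsetT card_imset // !cardsT card_prod !card_ord card_bool.
  by rewrite dE addnn muln2 leqnn.
have -> : total p = \rsum_(x in [set: 'I_d]) p x by apply: eq_bigl => x; rewrite inE.
rewrite -e_onto big_imset /=; last by move=> u v _ _ /e_inj.
have -> : \rsum_(u in [set: 'I_D * bool]) p (e u) = \rsum_(u : 'I_D * bool) p (e (u.1, u.2)).
  by apply: eq_big => [u | [i b] _]; rewrite ?inE.
rewrite -(pair_bigA _ (fun i b => p (e (i, b)))) /=.
by apply: eq_bigr => i _; rewrite big_bool.
Qed.

Lemma imbalance_half_of e s p : injective e -> d = (D + D)%nat ->
  imbalance p (half_of e s) = signed_sum (fun i => p (e (i, true)) - p (e (i, false))) s.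
Proof.
move=> e_inj dE; have := total_split p (half_of e s).
rewrite (total_matching p e_inj dE) /imbalance rsum_half_of // => split_tot.
suff : signed_sum (fun i => p (e (i, true)) - p (e (i, false))) s
    + \rsum_(i : 'I_D) (p (e (i, true)) + p (e (i, false)))
    = 2 * \rsum_(i : 'I_D) p (e (i, s i)) by lra.
by rewrite /signed_sum rsum_mull -big_split; apply: eq_bigr => i _; case: (s i) => /=; ring.
Qed.

(* Both [p u] and [p v] are within a factor [exp eps] of the mean [total p / d]. *)
Lemma sub_le_of_ratio_le p eps u v : 0 <= eps -> (0 < d)%nat ->
  (forall x, 0 <= p x) -> (forall x x', p x <= exp eps * p x') ->
  p u - p v <= (exp (2 * eps) - 1) * (total p / INR d).
Proof.
move=> eps_ge0 d_gt0 p_ge0 ratio.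
have d_gt0R : 0 < INR d by apply: lt_0_INR; apply/ltP.
have E_ge1 : 1 <= exp eps by have := exp_ineq1_le eps; lra.
have exp2E : exp (2 * eps) = exp eps * exp eps by rewrite -exp_plus; congr exp; ring.
set m := total p / INR d.
have mean_mul : forall c, INR d * (c * m) = c * total p by move=> c; rewrite /m; field; lra.
have sum_constE c : \rsum_(x : 'I_d) c = INR d * c by rewrite rsum_const card_ord.
have le_mean : p u <= exp eps * m.
  apply: (Rmult_le_reg_l (INR d)) => //; rewrite mean_mul -sum_constE /total rsum_mull.
  exact: rsum_le.
have mean_le : m <= exp eps * p v.
  apply: (Rmult_le_reg_l (INR d)) => //; rewrite -{1}(Rmult_1_l m) mean_mul Rmult_1_l.
  by rewrite -sum_constE; apply: rsum_le.
have m_ge0 : 0 <= m by apply: Rmult_le_pos; [exact: rsum_ge0 | apply/Rlt_le/Rinv_0_lt_compat].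
have scaled : exp eps * p u <= exp eps * (exp eps * m) by apply: Rmult_le_compat_l; lra.
have slack : 0 <= (exp eps - 1) * (exp eps - 1) * (exp eps + 1) * m.
  by apply: Rmult_le_pos => //; apply: Rmult_le_pos; nra.
rewrite exp2E; apply: (Rmult_le_reg_l (exp eps)); first lra.
by nra.
Qed.

Lemma abs_imbalance_le_total p H :
  (forall x, 0 <= p x) -> Rabs (imbalance p H) <= total p.
Proof.
move=> p_ge0; rewrite (total_split p H) /imbalance.
have : 0 <= \rsum_(x in H) p x by apply: rsum_ge0.
have : 0 <= \rsum_(x in ~: H) p x by apply: rsum_ge0.
by move=> ? ?; apply: Rabs_le; lra.
Qed.

Lemma card_unbalanced_half_of e p eps t : injective e -> d = (D + D)%nat ->
  0 < eps -> 0 <= t -> (forall x, 0 <= p x) -> (forall x x', p x <= exp eps * p x') ->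
  INR #|[set s | unbalanced (balance_radius eps t d) p (half_of e s)]|
    <= 2 * 2 ^ D * exp (- t).
Proof.
move=> e_inj dE eps_gt0 t_ge0 p_ge0 ratio.
rewrite /balance_radius; set b := exp (2 * eps) - 1; set c := b * sqrt (t / INR d).
have b_gt0 : 0 < b by have := exp_increasing 0 (2 * eps); rewrite exp_0 /b; lra.
have c_ge0 : 0 <= c by apply: Rmult_le_pos; [lra | exact: sqrt_pos].
have bound_ge0 : 0 <= 2 * 2 ^ D * exp (- t).
  by have := pow_lt 2 D Rlt_0_2; have := exp_pos (- t); nra.
have tot_ge0 : 0 <= total p by apply: rsum_ge0.
have [tot_gt0 | tot0] := Rle_lt_or_eq_dec _ _ tot_ge0; last first.
  suff -> : [set s | unbalanced c p (half_of e s)] = set0 by rewrite cards0.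
  apply/setP => s; rewrite !inE; apply/RltbP => lt.
  have := abs_imbalance_le_total (half_of e s) p_ge0.
  by rewrite -tot0 Rmult_0_r in lt *; lra.
have D_gt0 : (0 < D)%nat.
  case: (posnP D) => [D0 | //]; move: tot_gt0; rewrite /total big_pred0 => [|[i]]; first lra.
  by rewrite dE D0.
have d_gt0n : (0 < d)%nat by rewrite dE addn_gt0 D_gt0.
have d_gt0 : 0 < INR d by apply/lt_0_INR/ltP.
set A := b * (total p / INR d).
have A_gt0 : 0 < A by apply: Rmult_lt_0_compat => //; apply: Rdiv_lt_0_compat.
have a_le i : Rabs (p (e (i, true)) - p (e (i, false))) <= A.
  have le u v : p u - p v <= A :=
    sub_le_of_ratio_le u v (Rlt_le _ _ eps_gt0) d_gt0n p_ge0 ratio.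
  have := le (e (i, true)) (e (i, false)); have := le (e (i, false)) (e (i, true)).
  by move=> ? ?; apply: Rabs_le; lra.
have exponentE : c * total p * (c * total p) / (2 * INR D * (A * A)) = t.
  have dDE : INR d = 2 * INR D by rewrite dE plus_INR; ring.
  have sqrtE : sqrt (t / INR d) * sqrt (t / INR d) = t / INR d.
    by apply: sqrt_sqrt; apply: Rmult_le_pos => //; apply/Rlt_le/Rinv_0_lt_compat.
  have -> : c * total p * (c * total p) =
      b * b * total p * total p * (sqrt (t / INR d) * sqrt (t / INR d)) by rewrite /c; ring.
  by rewrite sqrtE /A dDE; field; split; lra.
rewrite (_ : [set s | _] = [set s | Rltb (c * total p)
    (Rabs (signed_sum (fun i => p (e (i, true)) - p (e (i, false))) s))]); last first.
  by apply/setP => s; rewrite !inE /unbalanced imbalance_half_of.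
by rewrite -exponentE; apply: card_abs_signed_sum_gt => //; apply: Rmult_le_pos; lra.
Qed.

End Halves.

Lemma exists_inj_imset (T : finType) (A B : {set T}) : #|A| = #|B| ->
  exists f : T -> T, injective f /\ f @: A = B.
Proof.
move=> cardAB; set sA := enum A ++ enum (~: A); set sB := enum B ++ enum (~: B).
have uniq_split (C : {set T}) : uniq (enum C ++ enum (~: C)).
  rewrite cat_uniq !enum_uniq andbT /=; apply/hasPn => x.
  by rewrite !mem_enum inE => ->.
have sA_mem x : x \in sA by rewrite mem_cat !mem_enum inE orbN.
have size_sA : size sA = size sB by rewrite !size_cat -!cardE !cardsC.
have idx_lt z : (index z sA < size sB)%nat by rewrite -size_sA index_mem.
pose f x := nth x sB (index x sA).
have f_inj : injective f.
  move=> x y /eqP; rewrite /f (set_nth_default x y (idx_lt y)) nth_uniq ?idx_lt ?uniq_split //.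
  by move/eqP=> eq_idx; rewrite -(nth_index x (sA_mem x)) eq_idx nth_index.
exists f; split => //; apply/eqP; rewrite eqEcard card_imset // cardAB leqnn andbT.
apply/subsetP => _ /imsetP[x xA ->].
have idx_ltB : (index x sA < size (enum B))%nat.
  by rewrite index_cat mem_enum xA -cardE -cardAB cardE index_mem mem_enum.
by rewrite /f nth_cat idx_ltB -(mem_enum (mem B)) mem_nth.
Qed.

Section UniformHalves.
Variables D d : nat.
Hypothesis dE : d = (D + D)%nat.

Definition coin_pairs (B : pred {set 'I_d}) :=
  [set es : {ffun 'I_D * bool -> 'I_d} * {ffun 'I_D -> bool} |
    injectiveb es.1 && B (half_of es.1 es.2)].

Definition half_fiber (H : {set 'I_d}) := coin_pairs (pred1 H).

(* Relabelling points by a bijection sending [H] to [H'] maps fibres injectively. *)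
Lemma card_half_fiber_eq (H H' : {set 'I_d}) : #|H| = #|H'| ->
  #|half_fiber H| = #|half_fiber H'|.
Proof.
suff le (A A' : {set 'I_d}) : #|A| = #|A'| -> (#|half_fiber A| <= #|half_fiber A'|)%nat.
  by move=> cardE; apply/eqP; rewrite eqn_leq !le.
move=> /exists_inj_imset[f [f_inj fAE]].
pose relabel (es : {ffun 'I_D * bool -> 'I_d} * {ffun 'I_D -> bool}) :=
  ([ffun u => f (es.1 u)], es.2).
have relabel_inj : injective relabel.
  move=> [e1 s1] [e2 s2] [/ffunP e12 ->]; congr (_, _); apply/ffunP => u.
  by apply: f_inj; have := e12 u; rewrite !ffunE.
rewrite -(card_imset _ relabel_inj); apply/subset_leq_card/subsetP => _ /imsetP[[e s] + ->].
rewrite !inE /= => /andP[/injectiveP e_inj /eqP halfE]; apply/andP; split.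
  by apply/injectiveP => u v; rewrite !ffunE => /f_inj/e_inj.
by rewrite -fAE -halfE /half_of -imset_comp; apply/eqP/eq_imset => i; rewrite /= ffunE.
Qed.

Lemma card_coin_pairs_matchings B :
  #|coin_pairs B| =
  (\sum_(e : {ffun 'I_D * bool -> 'I_d} | injectiveb e) #|[set s | B (half_of e s)]|)%nat.
Proof.
rewrite -sum1_card (eq_bigr (fun e => \sum_(s in [set s | B (half_of e s)]) 1)%nat).
  by rewrite pair_big_dep; apply: eq_bigl => -[e s]; rewrite !inE.
by move=> e _; rewrite sum1_card.
Qed.

Lemma card_coin_pairs_halves B :
  #|coin_pairs B| = (\sum_(H : {set 'I_d} | (#|H| == D) && B H) #|half_fiber H|)%nat.
Proof.
rewrite -sum1_card (partition_big (fun es => half_of es.1 es.2) (fun H => (#|H| == D) && B H)).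
  apply: eq_bigr => H /andP[_ BH]; rewrite -sum1_card; apply: eq_bigl => es.
  by rewrite !inE; case: eqP => [->|]; rewrite ?BH ?andbT ?andbF.
by move=> [e s]; rewrite inE /= => /andP[/injectiveP e_inj ->]; rewrite card_half_of ?eqxx.
Qed.

(* Averaging over all matchings turns the coin-flip half into a uniform [D]-subset. *)
Lemma card_good_halves (B : pred {set 'I_d}) :
  (forall e : {ffun 'I_D * bool -> 'I_d}, injective e ->
     (3 * #|[set s | B (half_of e s)]| <= expn 2 D)%nat) ->
  (2 * #|[set H : {set 'I_d} | #|H| == D]|
     <= 3 * #|[set H : {set 'I_d} | (#|H| == D) && ~~ B H]|)%nat.
Proof.
move=> bad_le.
have card_pairs : #|{: 'I_D * bool}| = d.
  by rewrite card_prod card_ord card_bool muln2 dE addnn.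
pose e0 : {ffun 'I_D * bool -> 'I_d} := [ffun u => cast_ord card_pairs (enum_rank u)].
have e0_inj : injective e0 by move=> u v; rewrite !ffunE => /cast_ord_inj/enum_rank_inj.
pose s0 : {ffun 'I_D -> bool} := [ffun => true].
pose H0 := half_of e0 s0.
have pairsE B' :
    #|coin_pairs B'| = (#|[set H : {set 'I_d} | (#|H| == D) && B' H]| * #|half_fiber H0|)%nat.
  rewrite card_coin_pairs_halves -sum_nat_const; apply: eq_big => [H | H /andP[/eqP cardH _]].
    by rewrite inE.
  by apply: card_half_fiber_eq; rewrite cardH card_half_of.
have fiber_gt0 : (0 < #|half_fiber H0|)%nat.
  by apply/card_gt0P; exists (e0, s0); rewrite !inE /=; apply/andP; split; [apply/injectiveP|].
have bad_third : (3 * #|[set H : {set 'I_d} | (#|H| == D) && B H]|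
                   <= #|[set H : {set 'I_d} | #|H| == D]|)%nat.
  rewrite -(leq_pmul2r fiber_gt0) -mulnA -pairsE.
  have allE : [set H : {set 'I_d} | #|H| == D] =
      [set H : {set 'I_d} | (#|H| == D) && xpredT H] by apply/setP => H; rewrite !inE andbT.
  rewrite allE -pairsE !card_coin_pairs_matchings big_distrr /=.
  apply: leq_sum => e /injectiveP e_inj.
  rewrite [in X in (_ <= X)%nat](_ : [set s | _] = setT) ?cardsT ?card_ffun ?card_bool ?card_ord //.
  exact: bad_le.
have splitE : #|[set H : {set 'I_d} | #|H| == D]| =
    (#|[set H : {set 'I_d} | (#|H| == D) && B H]|
     + #|[set H : {set 'I_d} | (#|H| == D) && ~~ B H]|)%nat.
  rewrite -(cardsID [set H | B H] [set H : {set 'I_d} | #|H| == D]).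
  by congr (_ + _)%nat; apply: eq_card => H; rewrite !inE // andbC.
by move: bad_third; rewrite splitE; lia.
Qed.

End UniformHalves.

(** * Privacy of [Q_{H,R}] *)

Lemma is_private_pointwise (X Y : finType) eps (rz : randomizer X Y) :
  is_private eps rz -> forall x x' y, rz x y <= exp eps * rz x' y.
Proof. by move=> priv x x' y; have := priv x x' [set y]; rewrite /prob !big_set1. Qed.

Lemma is_private_of_pointwise (X Y : finType) eps (rz : randomizer X Y) :
  (forall x x' y, rz x y <= exp eps * rz x' y) -> is_private eps rz.
Proof. by move=> le x x' S; rewrite /prob rsum_mull; apply: rsum_le. Qed.

(* [(1 + c) / (1 - c) <= 1 + 4 c <= exp (4 c)] for [0 <= c <= 1/2]. *)
Lemma le_exp_mul_of_abs_sub_le a b c : 0 <= a -> 0 <= b -> 0 <= c -> c < 1/2 ->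
  Rabs (a - b) <= c * (a + b) -> a <= exp (4 * c) * b.
Proof.
move=> a_ge0 b_ge0 c_ge0 c_lt abs_le.
have sub_le : a - b <= c * (a + b) by apply: Rle_trans (Rle_abs _) abs_le.
have ratio_le : 1 + c <= exp (4 * c) * (1 - c) by have := exp_ineq1_le (4 * c); nra.
by apply: (Rmult_le_reg_r (1 - c)); [lra | nra].
Qed.

Lemma Q_private_of_balanced d (Y : finType) (rz : randomizer 'I_d Y) (H : {set 'I_d}) c :
  #|H| = #|~: H| -> (forall x y, 0 <= rz x y) -> 0 <= c -> c < 1/2 ->
  (forall y, ~~ unbalanced c (fun x => rz x y) H) -> is_private (4 * c) (Q H rz).
Proof.
move=> cardHC rz_ge0 c_ge0 c_lt balanced; apply: is_private_of_pointwise => b b' y.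
set sH := \rsum_(x in H) rz x y; set sC := \rsum_(x in ~: H) rz x y.
have sH_ge0 : 0 <= sH by apply: rsum_ge0.
have sC_ge0 : 0 <= sC by apply: rsum_ge0.
have abs_le : Rabs (sH - sC) <= c * (sH + sC).
  by move/RltbP: (balanced y); rewrite /imbalance (total_split _ H) -/sH -/sC; lra.
have sH_le := le_exp_mul_of_abs_sub_le sH_ge0 sC_ge0 c_ge0 c_lt abs_le.
have sC_le : sC <= exp (4 * c) * sH.
  by apply: le_exp_mul_of_abs_sub_le => //; rewrite Rabs_minus_sym Rplus_comm.
have unif_outE (A : {set 'I_d}) :
    unif_out rz A y = / INR #|A| * \rsum_(x in A) rz x y.
  by rewrite /unif_out rsum_mull; apply: eq_bigr => x _; rewrite Rmult_comm.
have inv_ge0 : 0 <= / INR #|H|.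
  case: (posnP #|H|) => [-> | /ltP/lt_0_INR/Rinv_0_lt_compat/Rlt_le //].
  by rewrite Rinv_0; apply: Rle_refl.
have self_le u : 0 <= u -> u <= exp (4 * c) * u.
  by have := exp_ineq1_le (4 * c); nra.
have scale u v :
    u <= exp (4 * c) * v -> / INR #|H| * u <= exp (4 * c) * (/ INR #|H| * v) by nra.
rewrite /Q; case: b; case: b'; rewrite !unif_outE -?cardHC; apply: scale.
- exact: self_le.
- exact: sH_le.
- exact: sC_le.
- exact: self_le.
Qed.

Lemma num_distinct_cover n k (T : Type) (Rs : 'I_n -> T) : num_distinct Rs k ->
  exists f : 'I_k -> 'I_n, forall i, exists j, Rs (f j) = Rs i.
Proof.
move=> [g [g_onto g_eq]].
have hit j : exists i, g i == j by have [i <-] := g_onto j; exists i.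
exists (fun j => xchoose (hit j)) => i; exists (g i).
exact/g_eq/eqP/(xchooseP (hit (g i))).
Qed.

Lemma card_bigcup_le (I T : finType) (F : I -> {set T}) :
  (#|\bigcup_i F i| <= \sum_i #|F i|)%nat.
Proof.
elim/big_rec2: _ => [|i m A _ le]; first by rewrite cards0.
exact: leq_trans (leq_card_setU _ _).1 (leq_add (leqnn _) le).
Qed.

Definition some_unbalanced n d (Y : finType) (Rs : 'I_n -> randomizer 'I_d Y) c
    (H : {set 'I_d}) : bool :=
  [exists i, exists y, unbalanced c (fun x => Rs i x y) H].

Lemma card_some_unbalanced_half_of D d n k (Y : finType) (Rs : 'I_n -> randomizer 'I_d Y)
    eps (e : {ffun 'I_D * bool -> 'I_d}) :
  d = (D + D)%nat -> injective e -> 0 < eps ->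
  (forall i, is_randomizer (Rs i)) -> (forall i, is_private eps (Rs i)) -> num_distinct Rs k ->
  (3 * #|[set s | some_unbalanced Rs (balance_radius eps (ln (12 * INR #|Y| * INR k)) d)
                                    (half_of e s)]| <= expn 2 D)%nat.
Proof.
move=> dE e_inj eps_gt0 rz_ok rz_priv /num_distinct_cover[f f_cover].
set c := balance_radius _ _ _.
set N := 12 * INR #|Y| * INR k.
pose B (jy : 'I_k * Y) := [set s | unbalanced c (fun x => Rs (f jy.1) x jy.2) (half_of e s)].
have cover : [set s | some_unbalanced Rs c (half_of e s)] \subset \bigcup_jy B jy.
  apply/subsetP => s; rewrite inE => /existsP[i /existsP[y bad]].
  have [j Rs_fj] := f_cover i.
  by apply/bigcupP; exists (j, y) => //; rewrite inE /= Rs_fj.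
have B_le jy : INR #|B jy| <= 2 * 2 ^ D / N.
  have N_ge1 : 1 <= INR #|Y| * INR k.
    have Y_ge1 : 1 <= INR #|Y| by apply/(le_INR 1)/leP/card_gt0P; exists jy.2.
    have k_ge1 : 1 <= INR k by apply/(le_INR 1)/leP; apply: leq_ltn_trans (ltn_ord jy.1).
    by nra.
  have L_ge0 : 0 <= ln N by rewrite -ln_1; apply/Rlt_le/ln_increasing; rewrite /N; lra.
  have : INR #|B jy| <= 2 * 2 ^ D * exp (- ln N) :=
    card_unbalanced_half_of e_inj dE eps_gt0 L_ge0 (fun x => (rz_ok (f jy.1)).1 x jy.2)
      (fun x x' => is_private_pointwise (rz_priv (f jy.1)) x x' jy.2).
  by rewrite exp_Ropp exp_ln /N; lra.
have sum_le : INR #|[set s | some_unbalanced Rs c (half_of e s)]|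
    <= INR #|{: 'I_k * Y}| * (2 * 2 ^ D / N).
  rewrite -rsum_const; apply: (Rle_trans _ (\rsum_(jy : 'I_k * Y) INR #|B jy|)); last first.
    by apply: rsum_le => jy _; apply: B_le.
  rewrite -(big_morph INR plus_INR (erefl (INR 0))).
  exact/le_INR/leP/(leq_trans (subset_leq_card cover))/card_bigcup_le.
have two_pow_gt0 : 0 < 2 ^ D by apply: pow_lt; lra.
have INR2 : INR 2 = 2 by rewrite /=; ring.
have INR3 : INR 3 = 3 by rewrite /=; ring.
apply/leP/INR_le; rewrite -multE mult_INR INR_expn INR2 INR3.
rewrite card_prod card_ord -multE mult_INR in sum_le.
have [kY0 | kY_neq0] := Req_dec (INR k * INR #|Y|) 0.
  by rewrite kY0 Rmult_0_l in sum_le; lra.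
rewrite (_ : INR k * INR #|Y| * (2 * 2 ^ D / N) = 2 ^ D / 6) in sum_le; last first.
  by rewrite /N; field; split => zero; apply: kY_neq0; rewrite zero; ring.
lra.
Qed.

Lemma balance_radius_ge0 eps t d : 0 <= eps -> 0 <= balance_radius eps t d.
Proof.
move=> eps_ge0; apply: Rmult_le_pos; last exact: sqrt_pos.
by have := exp_ineq1_le (2 * eps); lra.
Qed.

Lemma balance_radius_lt_half eps t d : 0 <= eps ->
  INR d > 4 * (exp (2 * eps) - 1) ^ 2 * t -> balance_radius eps t d < 1/2.
Proof.
move=> eps_ge0 d_gt; have c_ge0 := balance_radius_ge0 t d eps_ge0.
rewrite /balance_radius in c_ge0 *; set b := exp (2 * eps) - 1 in d_gt c_ge0 *.
have [td_le0 | td_gt0] := Rle_lt_dec (t / INR d) 0; first by rewrite sqrt_neg_0 //; lra.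
have d_gt0 : 0 < INR d.
  have [d0 | ] := Req_dec (INR d) 0; last by have := pos_INR d; lra.
  by move: td_gt0; rewrite d0 Rdiv_0_r; lra.
have sqr_lt : b * sqrt (t / INR d) * (b * sqrt (t / INR d)) < 1/2 * (1/2).
  have -> : b * sqrt (t / INR d) * (b * sqrt (t / INR d)) =
      b * b * (sqrt (t / INR d) * sqrt (t / INR d)) by ring.
  rewrite sqrt_sqrt; last lra.
  apply: (Rmult_lt_reg_r (INR d)) => //.
  by rewrite (_ : b * b * (t / INR d) * INR d = b * b * t); [lra | field; lra].
by nra.
Qed.

Lemma balance_radius_mul4 eps t d :
  (exp (2 * eps) - 1) * sqrt (16 / INR d * t) = 4 * balance_radius eps t d.
Proof.
rewrite /balance_radius (_ : 16 / INR d * t = 4 * 4 * (t / INR d)); last first.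
  by rewrite /Rdiv; ring.
rewrite sqrt_mult_alt; last lra.
by rewrite sqrt_square; [ring | lra].
Qed.

(* [Reals] rebinds the [%N] delimiter, so the statement must be read outside [R_scope]. *)
Close Scope R_scope.

Theorem mainTheorem6 (eps : R) (d n : nat) (Y : finType)
  (Rs : 'I_n -> randomizer 'I_d Y) (k : nat) :
  (0 < eps)%R ->
  (forall i, is_randomizer (Rs i)) ->
  (forall i, is_private eps (Rs i)) ->
  ~~ odd d ->
  num_distinct Rs k ->
  (INR d > 4 * (exp (2 * eps) - 1) ^ 2 * ln (12 * INR #|Y| * INR k))%R ->
  let eps' := ((exp (2 * eps) - 1) * sqrt (16 / INR d * ln (12 * INR #|Y| * INR k)))%R in
  exists G : {set {set 'I_d}},
    G \subset [set H : {set 'I_d} | #|H| == d./2] /\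
    (forall H, H \in G -> forall i, is_private eps' (Q H (Rs i))) /\
    (2 * #|[set H : {set 'I_d} | #|H| == d./2]| <= 3 * #|G|)%N.
Proof.
move=> eps_gt0 rz_ok rz_priv d_even distinct d_large eps'.
set D := d./2; set c := balance_radius eps (ln (12 * INR #|Y| * INR k)) d.
have dE : d = (D + D)%nat by rewrite addnn -[LHS]odd_double_half (negbTE d_even).
have eps'E : eps' = (4 * c)%R by rewrite /eps' balance_radius_mul4.
have c_ge0 : (0 <= c)%R by apply: balance_radius_ge0; lra.
have c_lt : (c < 1/2)%R by apply: balance_radius_lt_half; lra.
exists [set H : {set 'I_d} | (#|H| == D) && ~~ some_unbalanced Rs c H]; split; [|split].
- by apply/subsetP => H; rewrite !inE => /andP[].
- move=> H; rewrite inE => /andP[/eqP cardH balanced] i; rewrite eps'E.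
  apply: Q_private_of_balanced => // [|x y|y].
  + have := cardsC H; rewrite card_ord cardH => cardHC.
    by apply/eqP; rewrite -(eqn_add2l D) cardHC dE.
  + exact: (rz_ok i).1.
  + by apply: contra balanced => bad; apply/existsP; exists i; apply/existsP; exists y.
- apply: (@card_good_halves D d dE (some_unbalanced Rs c)) => e e_inj.
  exact: card_some_unbalanced_half_of.
Qed.
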